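(* Let $(U,G,\Gamma)$ be a preuniformizer for an étale category $\mathcal B=(B,\mathbf B)$. Then: (i) For every $x\in U$, the semigroup $\mathrm{Mor}_{\mathcal B}(x,x)$ is isomorphic via $g\mapsto\Gamma(g,x)$ to the subgroup $G_x=\{g\in G\mid g*x=x\}$; in particular $\mathrm{Mor}_{\mathcal B}(x,x)$ is a group, and these groups are isomorphic as $x$ varies in a $G$-orbit. (ii) $|U|=\pi_{\mathcal B}(U)$ is open in $|\mathcal B|$, and the induced map $|\Gamma|:U/G\to|U|$ is a local homeomorphism (quotient topology on $U/G$, subspace topology on $|U|$). (iii) If $\mathcal B$ is a groupoid and $(U,G,\Gamma)$ is a local uniformizer, then $|\Gamma|:U/G\to|U|$ is injective, hence a homeomorphism.
   Context: Fix one of the ''étale classes'': (a) metrizable spaces with local homeomorphisms; (b) finite-dimensional second countable topological manifolds with local homeomorphisms; (c) finite-dimensional second countable smooth manifolds (possibly with boundary and corners) with local diffeomorphisms; (d) M-polyfolds with local sc-diffeomorphisms; spaces/maps in it are étale spaces/maps. An étale category $\mathcal B=(B,\mathbf B)$ is a topological category whose object and morphism spaces are étale spaces and whose source, target, unit and composition maps are étale; composition $m\circ m'$ is defined when $t(m)=s(m')$ (first $m$ then $m'$). $\mathrm{Mor}_{\mathcal B}(U_1,U_2)=s^{-1}(U_1)\cap t^{-1}(U_2)$. The realization $|\mathcal B|=B/{\sim_{\mathcal B}}$ (equivalence relation generated by existence of morphisms) has the quotient topology and quotient map $\pi_{\mathcal B}$. A preuniformizer $(U,G,\Gamma)$ for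 $\mathcal B$ consists of an open subset $U\subset B$, an étale left action $G\times U\to U$, $(g,y)\mapsto g*y$, of a finite group $G$, and an étale injection $\Gamma:G\times U\to\mathrm{Mor}_{\mathcal B}(U,U)$ such that (a) $s(\Gamma(g,y))=y$, $t(\Gamma(g,y))=g*y$, $\Gamma(hg,y)=\Gamma(g,y)\circ\Gamma(h,g*y)$; (b) $\Gamma(G\times U)$ contains every connected component of $\mathrm{Mor}_{\mathcal B}(U,U)$ containing a morphism $m$ with $s(m)=t(m)$; (c) the induced map $|\Gamma|:U/G\to|\mathcal B|$ is locally injective and $\sup_{p\in|U|}\#\{[x]\in U/G: \pi_{\mathcal B}(x)=p\}<\infty$. If $\mathcal B$ is a groupoid and $\Gamma$ is surjective onto $\mathrm{Mor}_{\mathcal B}(U,U)$, $(U,G,\Gamma)$ is called a local uniformizer. *)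

From HB Require Import structures.
From mathcomp Require Import all_boot all_order all_algebra all_fingroup.
From mathcomp Require Import all_classical all_reals.
From mathcomp Require Import topology.
From Stdlib Require Import Relations.Relation_Operators.

Set Implicit Arguments.
Unset Strict Implicit.
Unset Printing Implicit Defensive.

Local Open Scope classical_set_scope.
Local Open Scope quotient_scope.

Definition rel_open {T : topologicalType} (A' S : set T) : Prop :=
  exists O : set T, open O /\ S = O `&` A'.

(* f is a local homeomorphism from the subspace A of T to the subspace A' of T':
   f maps A into A', f|A is continuous, and every x in A has an open
   neighbourhood N such that f is injective on A `&` N and maps relatively open
   subsets of A `&` N onto relatively open subsets of A' (so f restricted to
   A `&` N is a homeomorphism onto a relatively open subset of A'). *)
Definition loc_homeo {T T' : topologicalType} (A : set T) (A' : set T')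
    (f : T -> T') : Prop :=
  [/\ (forall x, A x -> A' (f x)),
      {within A, continuous f} &
      forall x, A x -> exists N : set T, [/\ open N, N x,
         {in A `&` N &, injective f} &
         forall V : set T, open V -> rel_open A' (f @` (A `&` N `&` V))]].

Definition homeo_onto {T T' : topologicalType} (A' : set T') (f : T -> T') : Prop :=
  [/\ continuous f, injective f, f @` setT = A' &
      forall V : set T, open V -> rel_open A' (f @` V)].

(* An abstract "étale class": a class of spaces (given as subsets of
   topological spaces, with the subspace topology) and of maps between them,
   in which every étale map is a local homeomorphism.  Each of the four
   classes (a)-(d) of the paper is an instance. *)
Record etale_class := EtaleClass {
  ec_space : forall T : topologicalType, set T -> Prop;
  ec_map : forall (T T' : topologicalType), set T -> set T' -> (T -> T') -> Prop;
  ec_map_loc_homeo : forall (T T' : topologicalType) (A : set T) (A' : set T')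
      (f : T -> T'), ec_map A A' f -> loc_homeo A A' f
}.

(* An étale category over the étale class E.  Composition [comp m m'] means
   "first m then m'" and is defined (meaningful) when t m = s m'. *)
Definition composable {B Mor : Type} (s t : Mor -> B) : set (Mor * Mor) :=
  [set p | t p.1 = s p.2].

Definition etale_category (E : etale_class) (B Mor : topologicalType)
    (s t : Mor -> B) (e : B -> Mor) (comp : Mor -> Mor -> Mor) : Prop :=
  [/\
      (forall x, s (e x) = x /\ t (e x) = x),
      (forall m m', t m = s m' -> s (comp m m') = s m /\ t (comp m m') = t m'),
      (forall m m' m'', t m = s m' -> t m' = s m'' ->
          comp (comp m m') m'' = comp m (comp m' m'')),
      (forall m, comp (e (s m)) m = m /\ comp m (e (t m)) = m) &
      [/\ [/\ ec_space E (@setT B), ec_space E (@setT Mor) &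
          ec_space E (composable s t)],
          ec_map E setT setT s /\ ec_map E setT setT t,
          ec_map E setT setT e &
          ec_map E (composable s t) setT (fun p => comp p.1 p.2)]].

Definition is_groupoid {B Mor : Type} (s t : Mor -> B) (e : B -> Mor)
    (comp : Mor -> Mor -> Mor) : Prop :=
  forall m, exists m', [/\ t m = s m', t m' = s m,
                          comp m m' = e (s m) & comp m' m = e (t m)].

Definition MorS {B Mor : Type} (s t : Mor -> B) (U1 U2 : set B) : set Mor :=
  [set m | U1 (s m) /\ U2 (t m)].

Section GenEquiv.
Variables (T : choiceType) (R : T -> T -> Prop).
Definition gen_rel (x y : T) : bool := `[< clos_refl_sym_trans T R x y >].
Lemma gen_rel_refl : reflexive gen_rel.
Proof. by move=> x; apply/asboolP; apply: rst_refl. Qed.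
Lemma gen_rel_sym : symmetric gen_rel.
Proof.
by move=> x y; apply/asboolP/asboolP; apply: rst_sym.
Qed.
Lemma gen_rel_trans : transitive gen_rel.
Proof.
move=> y x z /asboolP Hxy /asboolP Hyz; apply/asboolP.
exact: rst_trans Hxy Hyz.
Qed.
Canonical gen_equiv := EquivRel gen_rel gen_rel_refl gen_rel_sym gen_rel_trans.
End GenEquiv.

Definition quot_space (T : topologicalType) (R : T -> T -> Prop) : topologicalType :=
  quotient_topology {eq_quot gen_equiv R}.

Definition realization {B Mor : topologicalType} (s t : Mor -> B) : topologicalType :=
  quot_space (fun x y : B => exists m, s m = x /\ t m = y).

Definition pi_B {B Mor : topologicalType} (s t : Mor -> B) : B -> realization s t :=
  fun x => \pi_(realization s t) x.

Definition orbit_space {B : topologicalType} (G : finGroupType) (U : set B)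
    (act : G -> B -> B) : topologicalType :=
  quot_space (fun y z : U => exists g : G, act g (set_val y) = set_val z).

Definition Gamma_bar {B Mor : topologicalType} (s t : Mor -> B)
    (G : finGroupType) (U : set B) (act : G -> B -> B)
    (q : orbit_space U act) : realization s t :=
  pi_B s t (set_val (generic_quotient.repr q)).

Definition preuniformizer (E : etale_class) {B Mor : topologicalType}
    (s t : Mor -> B) (e : B -> Mor) (comp : Mor -> Mor -> Mor)
    (U : set B) (G : finGroupType) (act : G -> B -> B)
    (Gamma : G -> B -> Mor) : Prop :=
  [/\ open U,
      (* étale left action of G on U (G discrete, so étaleness of
         G x U -> U means étaleness of each y |-> g * y) *)
      [/\ (forall g y, U y -> U (act g y)),
          (forall y, U y -> act 1%g y = y),
          (forall g h y, U y -> act (g * h)%g y = act g (act h y)) &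
          (forall g, ec_map E U U (act g))],
      ((forall g, ec_map E U (MorS s t U U) (Gamma g)) /\
          (forall g h y z, U y -> U z -> Gamma g y = Gamma h z -> g = h /\ y = z)),
      (forall g h y, U y ->
          [/\ s (Gamma g y) = y, t (Gamma g y) = act g y &
              Gamma (h * g)%g y = comp (Gamma g y) (Gamma h (act g y))]) &
      [/\ (forall m, MorS s t U U m -> s m = t m ->
          connected_component (MorS s t U U) m
            `<=` [set Gamma g y | g in setT & y in U]) &
      ((forall q : orbit_space U act, exists N : set (orbit_space U act),
            [/\ open N, N q & {in N &, injective (@Gamma_bar B Mor s t G U act)}]) /\
       exists n : nat, forall (p : realization s t) (l : seq (orbit_space U act)),
          uniq l -> (forall q, q \in l -> @Gamma_bar B Mor s t G U act q = p) ->
          (size l <= n)%N)]].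

From HB Require Import structures.
From mathcomp Require Import all_boot all_order all_algebra all_fingroup.
From mathcomp Require Import all_classical all_reals.
From mathcomp Require Import topology.
From Stdlib Require Import Relation_Operators Operators_Properties.

(* (i) rests on axioms (a) and (b): a morphism m with s m = t m = x lies in
   its own connected component, so m = Gamma(g, y) for some g, whence y = x
   and g fixes x; conjugation by g then moves the isotropy group at x to the
   one at g * x.  For (ii), the saturation of an open W in B is open, because
   each step along a chain of morphisms carries an open O to t(s^-1 O) or
   s(t^-1 O), which are open as s and t are local homeomorphisms; an open V in
   U/G pulls back to some O ∩ U, and |Gamma|(V) = pi_B(O ∩ U).  For (iii), in a
   groupoid two points of U with the same image are joined by one morphism,
   which by surjectivity of Gamma is some Gamma(g, y), so they lie in one
   G-orbit. *)

Set Implicit Arguments.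
Unset Strict Implicit.
Unset Printing Implicit Defensive.

Local Open Scope classical_set_scope.
Local Open Scope quotient_scope.

Section LocalHomeomorphism.
Context {T T' : topologicalType} (f : T -> T').
Hypothesis f_loc_homeo : loc_homeo setT setT f.

Lemma loc_homeoT_continuous : continuous f.
Proof. by case: f_loc_homeo => _ cf _; apply/continuous_subspace_setT. Qed.

Lemma loc_homeoT_open_image W : open W -> open (f @` W).
Proof.
move=> oW; rewrite openE => _ [x Wx <-].
have [_ _ /(_ x I) [N [_ Nx _ /(_ W oW) [O [oO EO]]]]] := f_loc_homeo.
have O_sub : O `<=` f @` W.
  move=> z Oz; have : (f @` (setT `&` N `&` W)) z by rewrite EO.
  by case=> w [_ Ww] <-; exists w.
apply: (filterS O_sub); apply: open_nbhs_nbhs; split => //.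
suff : (f @` (setT `&` N `&` W)) (f x) by rewrite EO => -[].
by exists x.
Qed.

End LocalHomeomorphism.

Section Realization.
Context {B Mor : topologicalType} (s t : Mor -> B).

Definition mor_rel (x y : B) : Prop := exists m, s m = x /\ t m = y.

Lemma pi_B_eqP x y :
  pi_B s t x = pi_B s t y <-> clos_refl_sym_trans B mor_rel x y.
Proof. by split=> [/eqquotP/asboolP | ?]; last apply/eqquotP/asboolP. Qed.

Lemma pi_B_st m : pi_B s t (s m) = pi_B s t (t m).
Proof. by apply/pi_B_eqP/rst_step; exists m. Qed.

Hypotheses (s_cont : continuous s) (t_cont : continuous t).
Hypotheses (s_open : forall W, open W -> open (s @` W))
           (t_open : forall W, open W -> open (t @` W)).

Lemma open_pi_B_image W : open W -> open (pi_B s t @` W).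
Proof.
move=> oW; change (open (\pi_(realization s t) @^-1` (pi_B s t @` W))).
set S := (X in open X).
have SE z : S z <-> exists2 x, W x & pi_B s t x = pi_B s t z.
  by split=> -[x Wx E]; exists x.
have S_mor O : O `<=` S ->
    t @` (s @^-1` O) `<=` S /\ s @` (t @^-1` O) `<=` S.
  by move=> OS; split=> _ [m /OS /SE [x Wx E] <-];
    apply/SE; exists x; rewrite // E pi_B_st.
rewrite openE => y /SE [x Wx /pi_B_eqP xy].
have {}xy := clos_rst_rstn1 _ _ _ _ xy.
suff [O [oO Oy OS]] : exists O, [/\ open O, O y & O `<=` S].
  by apply: (filterS OS); apply: open_nbhs_nbhs.
elim: xy => [|a b [] [m [sm tm]] _ [O [oO Oa /S_mor [tsO stO]]]].
- by exists W; split=> // z Wz; apply/SE; exists z.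
- exists (t @` (s @^-1` O)); split=> //.
    by apply/t_open; move/continuousP: s_cont; apply.
  by exists m; rewrite /= ?sm.
- exists (s @` (t @^-1` O)); split=> //.
    by apply/s_open; move/continuousP: t_cont; apply.
  by exists m; rewrite /= ?tm.
Qed.

End Realization.

Section EtaleCategory.
Context {E : etale_class} {B Mor : topologicalType} {s t : Mor -> B}
  {e : B -> Mor} {comp : Mor -> Mor -> Mor}.
Hypothesis HB : etale_category E s t e comp.

Lemma etale_open_pi_B_image W : open W -> open (pi_B s t @` W).
Proof.
have [_ _ _ _ [_ [/ec_map_loc_homeo Hs /ec_map_loc_homeo Ht] _ _]] := HB.
apply: open_pi_B_image.
- exact: loc_homeoT_continuous Hs.
- exact: loc_homeoT_continuous Ht.
- exact: loc_homeoT_open_image Hs.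
- exact: loc_homeoT_open_image Ht.
Qed.

Lemma groupoid_pi_B_eq_mor x y : is_groupoid s t e comp ->
  pi_B s t x = pi_B s t y -> mor_rel s t x y.
Proof.
have [unit_st comp_st _ _ _] := HB.
move=> Hgr /pi_B_eqP; elim=> {x y} [x y //|x|x y _ [m [sm tm]]|].
- by exists (e x).
- have [m' [tm' tm'' _ _]] := Hgr m.
  by exists m'; rewrite -tm' tm'' sm.
- move=> x y z _ [m [sm tm]] _ [m' [sm' tm']].
  have [scomp tcomp] := comp_st m m' (etrans tm (esym sm')).
  by exists (comp m m'); rewrite scomp tcomp.
Qed.

Section Preuniformizer.
Context {U : set B} {G : finGroupType}
  {act : G -> B -> B} {Gamma : G -> B -> Mor}.
Hypothesis HU : preuniformizer E s t e comp U act Gamma.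

Local Notation Gamma_bar := (@Gamma_bar B Mor s t G U act).
Local Notation qU := (\pi_(orbit_space U act)).

Lemma open_U : open U.
Proof. by case: HU. Qed.

Lemma act_inU g y : U y -> U (act g y).
Proof. by case: HU => _ [+ _ _ _] _ _ _; apply. Qed.

Lemma act_one y : U y -> act 1%g y = y.
Proof. by case: HU => _ [_ + _ _] _ _ _; apply. Qed.

Lemma act_mul g h y : U y -> act (g * h)%g y = act g (act h y).
Proof. by case: HU => _ [_ _ + _] _ _ _; apply. Qed.

Lemma act_invK g y : U y -> act g^-1%g (act g y) = y.
Proof. by move=> Uy; rewrite -act_mul // mulVg act_one. Qed.

Lemma Gamma_st g y : U y -> s (Gamma g y) = y /\ t (Gamma g y) = act g y.
Proof. by case: HU => _ _ _ /(_ g g y) + _ Uy => /(_ Uy) []. Qed.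

Lemma Gamma_mul g h y : U y ->
  Gamma (h * g)%g y = comp (Gamma g y) (Gamma h (act g y)).
Proof. by case: HU => _ _ _ /(_ g h y) + _ Uy => /(_ Uy) []. Qed.

Lemma Gamma_inj g h y z : U y -> U z -> Gamma g y = Gamma h z -> g = h /\ y = z.
Proof. by case: HU => _ _ [_ inj] _ _; apply: inj. Qed.

Lemma pi_B_act g y : U y -> pi_B s t (act g y) = pi_B s t y.
Proof.
by move=> Uy; have [sG tG] := Gamma_st g Uy; rewrite -tG -pi_B_st sG.
Qed.

Lemma isotropy_Gamma_surj x m : U x -> s m = x -> t m = x ->
  exists2 g, act g x = x & Gamma g x = m.
Proof.
move=> Ux sm tm; have Mm : MorS s t U U m by split; rewrite ?sm ?tm.
case: HU => _ _ _ _ [+ _] => /(_ m Mm (etrans sm (esym tm)) m).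
case=> [|g _ [y Uy Em]]; first exact: connected_component_refl.
have [sG tG] := Gamma_st g Uy.
have yx : y = x by rewrite -sm -Em.
by subst y; exists g; rewrite // -[RHS]tm -Em.
Qed.

Lemma Gamma_mul_isotropy g h x : U x -> act g x = x ->
  Gamma (h * g)%g x = comp (Gamma g x) (Gamma h x).
Proof. by move=> Ux gx; rewrite Gamma_mul // gx. Qed.

Lemma Gamma1 x : U x -> Gamma 1%g x = e x.
Proof.
have [unit_st _ _ unit_comp _] := HB.
move=> Ux; have [se te] := unit_st x.
have [k _ ek] := isotropy_Gamma_surj Ux se te.
have [_ t1] := Gamma_st 1%g Ux.
have [_ unit_r] := unit_comp (Gamma 1%g x).
by rewrite -[LHS]unit_r t1 act_one // -ek -Gamma_mul_isotropy ?act_one // mulg1.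
Qed.

Lemma isotropy_mor_inverse x m : U x -> s m = x -> t m = x ->
  exists m', [/\ s m' = x, t m' = x, comp m m' = e x & comp m' m = e x].
Proof.
move=> Ux sm tm; have [g gx <-] := isotropy_Gamma_surj Ux sm tm.
have gVx : act g^-1%g x = x by rewrite -{1}gx act_invK.
have [sV tV] := Gamma_st g^-1%g Ux.
exists (Gamma g^-1%g x); rewrite sV tV gVx -!Gamma_mul_isotropy //.
by rewrite mulVg mulgV Gamma1.
Qed.

Definition isotropy_index x m : G :=
  xget 1%g (fun h => act h x = x /\ Gamma h x = m).

Lemma isotropy_indexK x h : U x -> act h x = x ->
  isotropy_index x (Gamma h x) = h.
Proof.
move=> Ux hx.
have ex_h : exists h', act h' x = x /\ Gamma h' x = Gamma h x by exists h.
by have [_ /Gamma_inj []] := xgetPex 1%g ex_h.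
Qed.

Lemma isotropy_conj_iso x g : U x ->
  exists phi : Mor -> Mor,
    [/\ (forall m, s m = x -> t m = x ->
            s (phi m) = act g x /\ t (phi m) = act g x),
        (forall m m', s m = x -> t m = x -> s m' = x -> t m' = x ->
            phi m = phi m' -> m = m'),
        (forall m', s m' = act g x -> t m' = act g x ->
            exists m, [/\ s m = x, t m = x & phi m = m']) &
        (forall m m', s m = x -> t m = x -> s m' = x -> t m' = x ->
            phi (comp m m') = comp (phi m) (phi m'))].
Proof.
move=> Ux; have Ugx := act_inU g Ux.
have conj_fix h : act h x = x -> act (g * h * g^-1)%g (act g x) = act g x.
  by move=> hx; rewrite !act_mul ?act_invK ?hx.
exists (fun m => Gamma (g * isotropy_index x m * g^-1)%g (act g x)); split.
- move=> m sm tm; have [h hx <-] := isotropy_Gamma_surj Ux sm tm.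
  by rewrite isotropy_indexK //; have [-> ->] := Gamma_st (g * h * g^-1)%g Ugx;
    rewrite conj_fix.
- move=> m m' sm tm sm' tm'.
  have [h hx <-] := isotropy_Gamma_surj Ux sm tm.
  have [h' hx' <-] := isotropy_Gamma_surj Ux sm' tm'.
  rewrite !isotropy_indexK // => /Gamma_inj [] //.
  move=> /(congr1 (fun k => g^-1 * k * g)%g).
  by rewrite /= !mulgA !mulVg !mul1g !mulgKV => ->.
- move=> m' sm' tm'; have [k kx <-] := isotropy_Gamma_surj Ugx sm' tm'.
  have kx' : act (g^-1 * k * g)%g x = x.
    by rewrite !act_mul ?act_inU // kx act_invK.
  have [sG tG] := Gamma_st (g^-1 * k * g)%g Ux.
  exists (Gamma (g^-1 * k * g)%g x); rewrite sG tG kx' isotropy_indexK //.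
  by rewrite !mulgA mulgV mul1g mulgK.
- move=> m m' sm tm sm' tm'.
  have [h hx <-] := isotropy_Gamma_surj Ux sm tm.
  have [h' hx' <-] := isotropy_Gamma_surj Ux sm' tm'.
  have hh'x : act (h' * h)%g x = x by rewrite act_mul // hx hx'.
  rewrite -Gamma_mul_isotropy // !isotropy_indexK //.
  rewrite -Gamma_mul_isotropy ?conj_fix //.
  by rewrite !mulgA mulgKV.
Qed.

Lemma Gamma_bar_pi (y : U) : Gamma_bar (qU y) = pi_B s t (set_val y).
Proof.
have : qU (generic_quotient.repr (qU y)) = qU y by rewrite reprK.
move/eqquotP/asboolP; rewrite /Gamma_bar.
move: (generic_quotient.repr _) => r.
move: r y; apply: clos_refl_sym_trans_ind => //.
- by move=> a b [g <-]; rewrite pi_B_act //; apply: set_valP.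
- by move=> a b c _ -> _ ->.
Qed.

Lemma Gamma_bar_in_image q : (pi_B s t @` U) (Gamma_bar q).
Proof.
by exists (set_val (generic_quotient.repr q)) => //; apply: set_valP.
Qed.

Lemma open_Gamma_bar_image V : open V -> open (Gamma_bar @` V).
Proof.
case=> O oO EO.
suff -> : Gamma_bar @` V = pi_B s t @` (O `&` U).
  by apply: etale_open_pi_B_image; apply: openI => //; apply: open_U.
apply/seteqP; split=> [_ [q Vq <-] | _ [z [Oz Uz] <-]].
- exists (set_val (generic_quotient.repr q)); split; last exact: set_valP.
  + have : (qU @^-1` V) (generic_quotient.repr q) by rewrite /= reprK.
    by rewrite -EO.
- pose y : U := SigSub (mem_set Uz).
  exists (qU y); last by rewrite Gamma_bar_pi.
  by have : (set_val @^-1` O) y by []; rewrite EO.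
Qed.

Lemma rel_open_Gamma_bar_image V :
  open V -> rel_open (pi_B s t @` U) (Gamma_bar @` V).
Proof.
move=> oV; exists (Gamma_bar @` V); split; first exact: open_Gamma_bar_image.
by rewrite setIidl // => _ [q _ <-]; apply: Gamma_bar_in_image.
Qed.

Lemma continuous_Gamma_bar : continuous Gamma_bar.
Proof.
apply/quotient_continuous.
have -> : Gamma_bar \o qU = pi_B s t \o set_val.
  by apply: funext => y; apply: Gamma_bar_pi.
have val_cont : continuous (set_val : U -> B).
  by apply/continuousP => A oA; exists A.
by move=> y; apply: continuous_comp; [apply: val_cont | apply: pi_continuous].
Qed.

Lemma open_realization_U : open (pi_B s t @` U).
Proof. exact: etale_open_pi_B_image open_U. Qed.

Lemma Gamma_bar_loc_homeo : loc_homeo setT (pi_B s t @` U) Gamma_bar.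
Proof.
split=> [q _| |q _]; first exact: Gamma_bar_in_image.
  exact: (continuous_subspace_setT _).1 continuous_Gamma_bar.
case: HU => _ _ _ _ [_ [/(_ q) [N [oN Nq Ninj]] _]].
exists N; split=> // [a b /set_mem [_ Na] /set_mem [_ Nb]|V oV].
  by apply: Ninj; apply: mem_set.
by apply: rel_open_Gamma_bar_image; rewrite setTI; apply: openI.
Qed.

Section LocalUniformizer.
Hypothesis groupoidB : is_groupoid s t e comp.
Hypothesis Gamma_onto :
  forall m, MorS s t U U m -> exists g y, U y /\ Gamma g y = m.

Lemma Gamma_bar_inj : injective Gamma_bar.
Proof.
move=> q1 q2 /(groupoid_pi_B_eq_mor groupoidB) [m [sm tm]].
have Mm : MorS s t U U m by split; rewrite ?sm ?tm; apply: set_valP.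
have [g [y [Uy Gm]]] := Gamma_onto Mm.
have [sG tG] := Gamma_st g Uy.
rewrite -(reprK q1) -(reprK q2); apply/eqquotP/asboolP/rst_step.
by exists g; rewrite -tm -Gm tG -sG Gm sm.
Qed.

Lemma Gamma_bar_homeo_onto : homeo_onto (pi_B s t @` U) Gamma_bar.
Proof.
split=> //; [exact: continuous_Gamma_bar | exact: Gamma_bar_inj | |].
- apply/seteqP; split=> [_ [q _ <-]|_ [z Uz <-]].
    exact: Gamma_bar_in_image.
  by exists (qU (SigSub (mem_set Uz))) => //; rewrite Gamma_bar_pi.
- exact: rel_open_Gamma_bar_image.
Qed.

End LocalUniformizer.
End Preuniformizer.
End EtaleCategory.

Theorem mainTheorem3 (E : etale_class) (B Mor : topologicalType)
    (s t : Mor -> B) (e : B -> Mor) (comp : Mor -> Mor -> Mor)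
    (U : set B) (G : finGroupType) (act : G -> B -> B) (Gamma : G -> B -> Mor)
    (HB : etale_category E s t e comp)
    (HU : preuniformizer E s t e comp U act Gamma) :
  (forall x, U x ->
     [/\ (forall g, act g x = x -> s (Gamma g x) = x /\ t (Gamma g x) = x),
         (forall g h, act g x = x -> act h x = x -> Gamma g x = Gamma h x -> g = h),
         (forall m, s m = x -> t m = x -> exists2 g, act g x = x & Gamma g x = m),
         (forall g h, act g x = x -> act h x = x ->
             Gamma (h * g)%g x = comp (Gamma g x) (Gamma h x)) &
         (forall m, s m = x -> t m = x ->
             exists m', [/\ s m' = x, t m' = x, comp m m' = e x & comp m' m = e x])])
  /\
  (forall x (g : G), U x ->
     exists phi : Mor -> Mor,
       [/\ (forall m, s m = x -> t m = x ->
               s (phi m) = act g x /\ t (phi m) = act g x),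
           (forall m m', s m = x -> t m = x -> s m' = x -> t m' = x ->
               phi m = phi m' -> m = m'),
           (forall m', s m' = act g x -> t m' = act g x ->
               exists m, [/\ s m = x, t m = x & phi m = m']) &
           (forall m m', s m = x -> t m = x -> s m' = x -> t m' = x ->
               phi (comp m m') = comp (phi m) (phi m'))])
  /\
  (open (pi_B s t @` U) /\
   loc_homeo setT (pi_B s t @` U) (@Gamma_bar B Mor s t G U act))
  /\
  (is_groupoid s t e comp ->
   (forall m, MorS s t U U m -> exists g y, U y /\ Gamma g y = m) ->
   injective (@Gamma_bar B Mor s t G U act) /\
   homeo_onto (pi_B s t @` U) (@Gamma_bar B Mor s t G U act)).
Proof.
split.
  move=> x Ux; split.
  - by move=> g gx; have [-> ->] := Gamma_st HU g Ux; rewrite gx.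
  - by move=> g h _ _ /(Gamma_inj HU Ux Ux) [].
  - by move=> m; exact: (isotropy_Gamma_surj HU Ux).
  - by move=> g h gx _; exact: (Gamma_mul_isotropy HU h Ux gx).
  - by move=> m; exact: (isotropy_mor_inverse HB HU Ux).
split; first by move=> x g; exact: (isotropy_conj_iso HU g).
split; first exact: conj (open_realization_U HB HU) (Gamma_bar_loc_homeo HB HU).
move=> groupoidB Gamma_onto.
exact: conj (Gamma_bar_inj HB HU groupoidB Gamma_onto)
            (Gamma_bar_homeo_onto HB HU groupoidB Gamma_onto).
Qed.
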